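(* Let $N\ge1$, $K\ge2$ be integers with $N$ divisible by $K$, put $m=N/K$, and let $\alpha\in[1,2]$. Let $\sigma$ be a mixed strategy of $\mathcal{B}_\alpha(N,K)$ such that either (a) for every battlefield $k$ the marginal $\sigma_k$ is the uniform distribution on the odd integers $\{1,3,\ldots,2m-1\}$, or (b) for every battlefield $k$ the marginal $\sigma_k$ is the uniform distribution on the even integers $\{0,2,\ldots,2m\}$. Then $\sigma$ is a symmetric equilibrium strategy of $\mathcal{B}_\alpha(N,K)$.
   Context: Fix integers $N\ge1$, $K\ge2$ and a real number $\alpha$. The Colonel Blotto game $\mathcal{B}_\alpha(N,K)$ is the two-player simultaneous-move game with players $A,B$, each with pure strategy set $S=\{s\in\{0,1,\ldots,N\}^K:\sum_{k=1}^K s_k=N\}$, in which the payoff of player $i$ at the pure profile $(s^i,s^{-i})$ is $\pi^i(s^i,s^{-i})=\sum_{k=1}^K\big(\mathbf 1[s^i_k>s^{-i}_k]+\tfrac{\alpha}{2}\mathbf 1[s^i_k=s^{-i}_k]\big)$. Mixed strategies are probability distributions on $S$, with expected payoffs under independent randomization. A symmetric equilibrium strategy is a mixed strategy $\sigma$ such that $(\sigma,\sigma)$ is a Nash equilibrium. For a mixed strategy $\sigma$ and battlefield $k$, the marginal $\sigma_k$ is the distribution of $s_k$ when $s\sim\sigma$. *)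

From mathcomp Require Import all_boot all_order all_algebra.
From mathcomp Require Import reals.
Set Implicit Arguments. Unset Strict Implicit. Unset Printing Implicit Defensive.
Import Order.TTheory GRing.Theory Num.Theory.
Local Open Scope ring_scope.

Definition alloc (N K : nat) := {ffun 'I_K -> 'I_N.+1}.

Definition feasible (N K : nat) (s : alloc N K) : bool :=
  (\sum_(k < K) (s k : nat))%N == N.

(* Mixed strategy: probability distribution on S (as a weight function on
   alloc N K, nonnegative, summing to 1, vanishing outside S). *)
Definition mixed (R : realType) (N K : nat) (sigma : alloc N K -> R) : Prop :=
  (forall s, 0 <= sigma s) /\
  (forall s, ~~ feasible s -> sigma s = 0) /\
  \sum_(s : alloc N K) sigma s = 1.

Definition payoff (R : realType) (alpha : R) (N K : nat) (s t : alloc N K) : R :=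
  \sum_(k < K) (((t k < s k)%N)%:R + alpha / 2 * ((s k == t k))%:R).

Definition payoffA (R : realType) (alpha : R) (N K : nat)
  (sA sB : alloc N K -> R) : R :=
  \sum_(a : alloc N K) \sum_(b : alloc N K) sA a * sB b * payoff alpha a b.
Definition payoffB (R : realType) (alpha : R) (N K : nat)
  (sA sB : alloc N K -> R) : R :=
  \sum_(a : alloc N K) \sum_(b : alloc N K) sA a * sB b * payoff alpha b a.

Definition symmetric_equilibrium (R : realType) (alpha : R) (N K : nat)
  (sigma : alloc N K -> R) : Prop :=
  mixed sigma /\
  (forall tau, mixed tau -> payoffA alpha tau sigma <= payoffA alpha sigma sigma) /\
  (forall tau, mixed tau -> payoffB alpha sigma tau <= payoffB alpha sigma sigma).

Definition marginal (R : realType) (N K : nat) (sigma : alloc N K -> R)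
  (k : 'I_K) (j : 'I_N.+1) : R :=
  \sum_(s : alloc N K | s k == j) sigma s.

From mathcomp Require Import all_boot all_order all_algebra.
From mathcomp Require Import reals.
From mathcomp Require Import zify ring lra.
Import Order.TTheory GRing.Theory Num.Theory.
Set Implicit Arguments. Unset Strict Implicit.
Local Open Scope ring_scope.

(* Against sigma, the expected payoff of a pure allocation a splits as
   sum_k F_k(a_k), where F_k depends only on the marginal sigma_k.  If sigma_k
   is uniform with weight w on the odd (t = 1) or even (t = 0) support, then
   F_k(x) = w (#support points below x + alpha/2 [x in support]) lies on the
   line w (x - t + alpha) / 2 at support points and, as alpha >= 1, not above
   it elsewhere.  Since sum_k a_k = N, every feasible allocation earns at most
   one constant, which every allocation played by sigma attains, so no
   deviation is profitable. *)

Section Blotto.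
Variables (R : realType) (N K : nat) (alpha : R).

Definition battle_payoff (x j : 'I_N.+1) : R :=
  ((j < x)%N)%:R + alpha / 2 * (x == j)%:R.

Definition exp_battle_payoff (sigma : alloc N K -> R) (k : 'I_K) (x : 'I_N.+1) : R :=
  \sum_(j : 'I_N.+1) marginal sigma k j * battle_payoff x j.

Lemma exp_payoff_by_battle (sigma : alloc N K -> R) (a : alloc N K) :
  \sum_b sigma b * payoff alpha a b = \sum_k exp_battle_payoff sigma k (a k).
Proof.
under eq_bigr do rewrite /payoff mulr_sumr.
rewrite exchange_big; apply: eq_bigr => k _.
rewrite (partition_big (fun b : alloc N K => b k) xpredT) //=.
apply: eq_bigr => j _; rewrite /marginal mulr_suml; apply: eq_big => // b.
by move/eqP => <-.
Qed.

Lemma payoffAE (tau sigma : alloc N K -> R) :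
  payoffA alpha tau sigma = \sum_a tau a * \sum_b sigma b * payoff alpha a b.
Proof.
apply: eq_bigr => a _; rewrite mulr_sumr; apply: eq_bigr => b _.
by rewrite mulrA.
Qed.

Lemma payoffBE (sA sB : alloc N K -> R) :
  payoffB alpha sA sB = payoffA alpha sB sA.
Proof.
rewrite /payoffB /payoffA exchange_big; apply: eq_bigr => a _.
by apply: eq_bigr => b _; rewrite [sA b * _]mulrC.
Qed.

Lemma marginal_ge (sigma : alloc N K -> R) k (a : alloc N K) :
  mixed sigma -> sigma a <= marginal sigma k (a k).
Proof.
case=> [sigma_ge0 _]; rewrite /marginal (bigD1 a) //= lerDl.
by apply: sumr_ge0 => b _; apply: sigma_ge0.
Qed.

Lemma mixed_support_feasible (sigma : alloc N K -> R) (a : alloc N K) :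
  mixed sigma -> sigma a != 0 -> feasible a.
Proof. by case=> _ [sigma_out _] sa; apply/negPn/negP => /sigma_out; apply/eqP. Qed.

Lemma affine_battle_bound_equilibrium (sigma : alloc N K -> R) (c d : R)
    (P : nat -> bool) :
  mixed sigma ->
  (forall k x, exp_battle_payoff sigma k x <= c * (x : nat)%:R + d) ->
  (forall k (x : 'I_N.+1), P x -> exp_battle_payoff sigma k x = c * (x : nat)%:R + d) ->
  (forall k j, marginal sigma k j != 0 -> P j) ->
  symmetric_equilibrium alpha sigma.
Proof.
move=> sigma_mixed F_le F_eq supp.
have [sigma_ge0 [_ sigma1]] := sigma_mixed.
set V := c * N%:R + K%:R * d.
have affine_sum (a : alloc N K) : feasible a -> \sum_k (c * (a k : nat)%:R + d) = V.
  move/eqP=> sum_a.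
  by rewrite big_split /= -mulr_sumr -natr_sum sum_a sumr_const card_ord /V mulr_natl.
have pure_le (a : alloc N K) : feasible a -> \sum_b sigma b * payoff alpha a b <= V.
  move=> fa; rewrite exp_payoff_by_battle -(affine_sum a fa).
  by apply: ler_sum => k _; apply: F_le.
have pure_eq (a : alloc N K) : sigma a != 0 -> \sum_b sigma b * payoff alpha a b = V.
  move=> sa; have fa := mixed_support_feasible sigma_mixed sa.
  rewrite exp_payoff_by_battle -(affine_sum a fa); apply: eq_bigr => k _.
  apply/(F_eq k)/supp/lt0r_neq0; apply: lt_le_trans (marginal_ge k a sigma_mixed).
  by rewrite lt_def sa sigma_ge0.
have value : payoffA alpha sigma sigma = V.
  rewrite payoffAE -[V]mul1r -sigma1 mulr_suml; apply: eq_bigr => a _.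
  by have [->|sa] := eqVneq (sigma a) 0; rewrite ?mul0r ?pure_eq.
have deviation (tau : alloc N K -> R) : mixed tau -> payoffA alpha tau sigma <= V.
  move=> [tau_ge0 [tau_out tau1]]; rewrite payoffAE -[V]mul1r -tau1 mulr_suml.
  apply: ler_sum => a _; have [fa|fa] := boolP (feasible a).
    by apply: ler_wpM2l => //; apply: pure_le.
  by rewrite tau_out // !mul0r.
split=> //; split=> tau /deviation; first by rewrite value.
by rewrite !payoffBE value.
Qed.

Lemma exp_battle_payoff_uniform (sigma : alloc N K -> R) k (w : R)
    (Q : nat -> bool) (x : 'I_N.+1) :
  (forall j, marginal sigma k j = if Q j then w else 0) ->
  exp_battle_payoff sigma k x =
    w * ((\sum_(j < N.+1) (Q j && (j < x)))%N%:R + alpha / 2 * (Q x)%:R).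
Proof.
move=> margE; rewrite /exp_battle_payoff.
under eq_bigr do rewrite margE /battle_payoff mulrDr.
rewrite big_split /= mulrDr natr_sum mulr_sumr; congr (_ + _).
  by apply: eq_bigr => j _; case: (Q j); case: (j < x)%N; rewrite ?mulr0 ?mul0r ?mulr1.
rewrite (bigD1 x) //= big1 ?addr0 => [|j /negbTE]; last first.
  by rewrite eq_sym => ->; rewrite !mulr0.
by rewrite eqxx mulr1; case: (Q x); rewrite ?mulr1 ?mulr0 ?mul0r // mulrC.
Qed.

Lemma half_count_bound (w : R) (q t x : nat) (b : bool) :
  0 <= w -> 1 <= alpha ->
  (if b then 2 * q + t = x else 2 * q + t <= x.+1)%N ->
  w * (q%:R + alpha / 2 * b%:R) <= w * (x%:R - t%:R + alpha) / 2 /\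
  (b -> w * (q%:R + alpha / 2 * b%:R) = w * (x%:R - t%:R + alpha) / 2).
Proof.
move=> w_ge0 alpha1; case: b => [qE|q_le].
  have {}qE : 2 * q%:R + t%:R = x%:R :> R by rewrite -qE natrD natrM.
  have -> : q%:R + alpha / 2 * true%:R = (x%:R - t%:R + alpha) / 2.
    by rewrite mulr1; lra.
  by rewrite mulrA.
have {}q_le : 2 * q%:R + t%:R <= x%:R + 1 :> R.
  by move: q_le; rewrite -addn1 -(ler_nat R) !(natrD, natrM); lra.
by rewrite mulr0 addr0 -mulrA; split=> [|//]; apply: ler_wpM2l => //; lra.
Qed.

Lemma uniform_marginal_equilibrium (sigma : alloc N K -> R) (Q : nat -> bool)
    (w : R) (t : nat) :
  mixed sigma -> 0 <= w -> 1 <= alpha ->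
  (forall k j, marginal sigma k j = if Q j then w else 0) ->
  (forall x : nat, (x <= N)%N ->
    let q := (\sum_(j < N.+1) (Q j && (j < x)))%N in
    if Q x then (2 * q + t = x)%N else (2 * q + t <= x.+1)%N) ->
  symmetric_equilibrium alpha sigma.
Proof.
move=> sigma_mixed w_ge0 alpha1 margE count.
have bound (x : 'I_N.+1) := half_count_bound w_ge0 alpha1 (count x (ltn_ord x)).
apply: (@affine_battle_bound_equilibrium _ (w / 2) (w * (alpha - t%:R) / 2) Q sigma_mixed).
- move=> k x; rewrite (exp_battle_payoff_uniform x (margE k)).
  by case: (bound x) => + _; congr (_ <= _); ring.
- move=> k x Qx; rewrite (exp_battle_payoff_uniform x (margE k)).
  by case: (bound x) => _ /(_ Qx) ->; ring.
- by move=> k j; rewrite margE; case: ifP => //; rewrite eqxx.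
Qed.

End Blotto.

Lemma sum_odd_lt (m x n : nat) :
  (\sum_(j < n) (odd j && (j < 2 * m) && (j < x)) = minn (minn n x) (2 * m) %/ 2)%N.
Proof.
elim: n => [|n IH]; first by rewrite big_ord0 !min0n.
rewrite big_ord_recr /= IH; have := modn2 n.
by case: (odd n) => /= ?; case: (ltnP n (2 * m)) => ?; case: (ltnP n x) => ? /=; lia.
Qed.

Lemma sum_even_le (m x n : nat) :
  (\sum_(j < n) (~~ odd j && (j <= 2 * m) && (j < x)) =
     (minn (minn n x) (2 * m).+1 + 1) %/ 2)%N.
Proof.
elim: n => [|n IH]; first by rewrite big_ord0 !min0n.
rewrite big_ord_recr /= IH; have := modn2 n.
by case: (odd n) => /= ?; case: (leqP n (2 * m)) => ?; case: (ltnP n x) => ? /=; lia.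
Qed.

Theorem mainTheorem13 (R : realType) (N K : nat) (alpha : R)
  (sigma : alloc N K -> R) :
  (1 <= N)%N -> (2 <= K)%N -> (K %| N)%N ->
  1 <= alpha <= 2 ->
  mixed sigma ->
  ((forall (k : 'I_K) (j : 'I_N.+1),
      marginal sigma k j =
      (if odd j && (j < 2 * (N %/ K))%N then ((N %/ K)%:R)^-1 else 0))
   \/
   (forall (k : 'I_K) (j : 'I_N.+1),
      marginal sigma k j =
      (if ~~ odd j && (j <= 2 * (N %/ K))%N then ((N %/ K).+1%:R)^-1 else 0))) ->
  symmetric_equilibrium alpha sigma.
Proof.
move=> _ _ _ /andP[alpha1 _] sigma_mixed.
set m := (N %/ K)%N.
case=> margE.
- apply: (uniform_marginal_equilibrium (Q := fun j => odd j && (j < 2 * m)%N)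
    (t := 1%N) sigma_mixed _ alpha1 margE); first by rewrite invr_ge0 ler0n.
  move=> x x_le /=; rewrite sum_odd_lt (minn_idPr (leqW x_le)).
  by have := modn2 x; case: (odd x) => /= ?; [case: ltnP => ?|]; lia.
- apply: (uniform_marginal_equilibrium (Q := fun j => ~~ odd j && (j <= 2 * m)%N)
    (t := 0%N) sigma_mixed _ alpha1 margE); first by rewrite invr_ge0 ler0n.
  move=> x x_le /=; rewrite sum_even_le (minn_idPr (leqW x_le)).
  by have := modn2 x; case: (odd x) => /= ?; [|case: leqP => ?]; lia.
Qed.
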